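(* Let $H,K$ be finite dimensional complex Hilbert spaces and let $\phi:\mathcal B(K)\to\mathcal B(H)$ be an arbitrary UCP map. Let $\mathcal S_\phi$ be the set of all states $\rho$ of $\mathcal B(K\otimes H)$ of the form $\rho(a\otimes b)=\langle(\phi(a)\otimes b)\xi,\xi\rangle$ ($a\in\mathcal B(K)$, $b\in\mathcal B(H)$), where $\xi$ ranges over the marginally cyclic unit vectors in $H\otimes H$. If $\mathcal S_\phi$ contains a single entangled state, then every state of $\mathcal S_\phi$ is entangled and $\phi$ preserves entanglement. Otherwise, $\phi$ is entanglement breaking.
   Context: A state of $\mathcal B(K\otimes H)$ is separable if it is a convex combination of product states $a\otimes b\mapsto\sigma(a)\tau(b)$ with $\sigma,\tau$ states of $\mathcal B(K)$, $\mathcal B(H)$; otherwise it is entangled. A unit vector $\xi\in H\otimes H$ is marginally cyclic if $(\mathcal B(H)\otimes\mathbf 1)\xi=H\otimes H$, equivalently if $(\mathbf 1\otimes b)\xi=0$ implies $b=0$ for $b\in\mathcal B(H)$. A UCP map $\phi:\mathcal B(K)\to\mathcal B(H)$ preserves entanglement if for every marginally cyclic unit vector $\xi\in H\otimes H$ the state $a\otimes b\mapsto\langle(\phi(a)\otimes b)\xi,\xi\rangle$ of $\mathcal B(K\otimes H)$ is entangled. $\phi$ is entanglement breaking if for every state $\rho$ of $\mathcal B(H\otimes H)$ the state $\rho\circ(\phi\otimes\mathrm{id}_{\mathcal B(H)})$ of $\mathcal B(K\otimes H)$ is separable, where $\phi\otimes\mathrm{id}$ is the UCP map sending $a\otimes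 b$ to $\phi(a)\otimes b$. *)

(* Finite-dimensional Hilbert spaces are C^n with C = R[i],
   R : realType (any realType is isomorphic to the reals). *)
From HB Require Import structures.
From mathcomp Require Import all_boot all_order all_algebra.
From mathcomp Require Import reals.
From mathcomp.real_closed Require Import complex mxtens.
Set Implicit Arguments. Unset Strict Implicit. Unset Printing Implicit Defensive.
Import Order.TTheory GRing.Theory Num.Theory.
Local Open Scope ring_scope.

Section Defs.
Variable R : realType.
Local Notation C := R[i].

Definition adj {p q : nat} (A : 'M[C]_(p, q)) : 'M[C]_(q, p) :=
  (map_mx Num.conj A)^T.

(* <x, y> := y^* x, linear in the first variable *)
Definition inner {N : nat} (x y : 'cV[C]_N) : C := (adj y *m x) 0 0.

Definition unit_vector {N : nat} (x : 'cV[C]_N) : Prop := inner x x = 1.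

Definition psd {N : nat} (A : 'M[C]_N) : Prop :=
  forall x : 'cV[C]_N, 0 <= inner (A *m x) x.

Definition is_linear {p q : nat} {V : lmodType C} (f : 'M[C]_(p, q) -> V) : Prop :=
  forall (c : C) (A B : 'M[C]_(p, q)), f (c *: A + B) = c *: f A + f B.

Definition is_state {N : nat} (rho : 'M[C]_N -> C) : Prop :=
  [/\ forall (c : C) A B, rho (c *: A + B) = c * rho A + rho B,
      forall A, psd A -> 0 <= rho A
    & rho 1%:M = 1].

(* phi (x) id_{M_k} : M_m (x) M_k -> M_n (x) M_k, tensors realised as
   Kronecker products (mxtens: A *t B) on C^(m*k) *)
Definition tens_id {m n : nat} (k : nat) (phi : 'M[C]_m -> 'M[C]_n)
    (X : 'M[C]_(m * k)) : 'M[C]_(n * k) :=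
  \sum_(i < m) \sum_(j < m) \sum_(k1 < k) \sum_(l < k)
     X (mxtens_index (i, k1)) (mxtens_index (j, l)) *:
       (phi (delta_mx i j) *t (delta_mx k1 l : 'M[C]_k)).

Definition completely_positive {m n : nat} (phi : 'M[C]_m -> 'M[C]_n) : Prop :=
  forall (k : nat) (X : 'M[C]_(m * k)), psd X -> psd (tens_id phi X).

Definition UCP {m n : nat} (phi : 'M[C]_m -> 'M[C]_n) : Prop :=
  [/\ is_linear phi, phi 1%:M = 1%:M & completely_positive phi].

Definition separable {m n : nat} (rho : 'M[C]_(m * n) -> C) : Prop :=
  exists (r : nat) (p : 'I_r -> C) (sigma : 'I_r -> 'M[C]_m -> C)
         (tau : 'I_r -> 'M[C]_n -> C),
    [/\ forall j, 0 <= p j,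
        \sum_(j < r) p j = 1,
        forall j, is_state (sigma j) /\ is_state (tau j)
      & forall (a : 'M[C]_m) (b : 'M[C]_n),
          rho (a *t b) = \sum_(j < r) p j * sigma j a * tau j b].

Definition entangled {m n : nat} (rho : 'M[C]_(m * n) -> C) : Prop :=
  is_state rho /\ ~ separable rho.

Definition marginally_cyclic {n : nat} (xi : 'cV[C]_(n * n)) : Prop :=
  forall eta : 'cV[C]_(n * n),
    exists a : 'M[C]_n, (a *t (1%:M : 'M[C]_n)) *m xi = eta.

Definition vstate {N : nat} (xi : 'cV[C]_N) (Y : 'M[C]_N) : C := inner (Y *m xi) xi.

(* the state a (x) b |-> <(phi a (x) b) xi, xi>, i.e. omega_xi o (phi (x) id) *)
Definition phi_state {m n : nat} (phi : 'M[C]_m -> 'M[C]_n) (xi : 'cV[C]_(n * n))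
    : 'M[C]_(m * n) -> C :=
  fun X => vstate xi (tens_id phi X).

Definition S_phi {m n : nat} (phi : 'M[C]_m -> 'M[C]_n)
    (rho : 'M[C]_(m * n) -> C) : Prop :=
  exists xi : 'cV[C]_(n * n),
    [/\ unit_vector xi, marginally_cyclic xi & rho = phi_state phi xi].

Definition preserves_entanglement {m n : nat} (phi : 'M[C]_m -> 'M[C]_n) : Prop :=
  forall xi : 'cV[C]_(n * n), unit_vector xi -> marginally_cyclic xi ->
    entangled (phi_state phi xi).

Definition entanglement_breaking {m n : nat} (phi : 'M[C]_m -> 'M[C]_n) : Prop :=
  forall rho : 'M[C]_(n * n) -> C, is_state rho ->
    separable (fun X : 'M[C]_(m * n) => rho (tens_id phi X)).

End Defs.

(* Write xi = vec X. Marginal cyclicity of xi says exactly that X is invertible,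
   and <(phi a (x) E_kl) vec X, vec X> = (X^* phi(a) X)_kl. Hence if the state
   attached to xi is separable, sum_j p_j sigma_j (x) tau_j, then
   X^* phi(a) X = sum_j p_j sigma_j(a) T_j with T_j >= 0, and conjugating by X^-1
   puts phi in Holevo form phi(a) = sum_j sigma_j(a) F_j with F_j >= 0. Such a map
   is entanglement breaking, since
   rho(phi(a) (x) b) = sum_j sigma_j(a) rho(F_j (x) b) and b |-> rho(F_j (x) b) is
   a positive functional. So a single separable state in S_phi forces every state
   of S_phi to be separable, while the maximally entangled vector shows that
   S_phi is not empty (for n = 0 there are no states at all). *)

From mathcomp Require Import all_boot all_order all_algebra.
From mathcomp Require Import reals spectral ring.
From Stdlib Require Import Classical.
From mathcomp.real_closed Require Import complex mxtens.
Set Implicit Arguments. Unset Strict Implicit. Unset Printing Implicit Defensive.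
Import Order.TTheory GRing.Theory Num.Theory.
Local Open Scope ring_scope.

Lemma mxtrace_mul_delta (R : comPzRingType) n (A : 'M[R]_n) i j :
  \tr (A *m delta_mx i j) = A j i.
Proof.
rewrite /mxtrace (bigD1 j) //= big1 => [|k nkj]; rewrite mxE.
  rewrite (bigD1 i) //= big1 ?addr0 => [|l nli]; rewrite mxE ?eqxx ?mulr1 //.
  by rewrite (negbTE nli) mulr0.
by rewrite big1 // => l _; rewrite mxE eq_sym (negbTE nkj) andbF mulr0.
Qed.

Lemma big_mxtens_index (V : nmodType) m n (F : 'I_(m * n) -> V) :
  \sum_I F I = \sum_(i < m) \sum_(k < n) F (mxtens_index (i, k)).
Proof.
rewrite pair_big (reindex (@mxtens_index m n)) /=; last first.
  apply: onW_bij; exists (@mxtens_unindex m n).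
    exact: mxtens_indexK.
  exact: mxtens_unindexK.
by apply: eq_bigr => -[].
Qed.

Section TensorBilinear.
Variable R : comPzRingType.

Lemma tensmxDl m n p q (A B : 'M[R]_(m, n)) (M : 'M[R]_(p, q)) :
  (A + B) *t M = A *t M + B *t M.
Proof. by apply/matrixP=> i j; rewrite !mxE mulrDl. Qed.

Lemma tensmxDr m n p q (A B : 'M[R]_(m, n)) (M : 'M[R]_(p, q)) :
  M *t (A + B) = M *t A + M *t B.
Proof. by apply/matrixP=> i j; rewrite !mxE mulrDr. Qed.

Lemma tensmxZl m n p q c (A : 'M[R]_(m, n)) (M : 'M[R]_(p, q)) :
  (c *: A) *t M = c *: (A *t M).
Proof. by apply/matrixP=> i j; rewrite !mxE mulrA. Qed.

Lemma tensmxZr m n p q c (A : 'M[R]_(m, n)) (M : 'M[R]_(p, q)) :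
  M *t (c *: A) = c *: (M *t A).
Proof. by apply/matrixP=> i j; rewrite !mxE mulrCA. Qed.

Lemma tensmx_suml m n p q (M : 'M[R]_(p, q)) (I : Type) (r : seq I) (P : pred I)
    (F : I -> 'M[R]_(m, n)) :
  (\sum_(i <- r | P i) F i) *t M = \sum_(i <- r | P i) F i *t M.
Proof. exact: (big_morph (fun A => A *t M) (fun A B => tensmxDl A B M) (tens0mx M)). Qed.

Lemma tensmx_sumr m n p q (M : 'M[R]_(p, q)) (I : Type) (r : seq I) (P : pred I)
    (F : I -> 'M[R]_(m, n)) :
  M *t (\sum_(i <- r | P i) F i) = \sum_(i <- r | P i) M *t F i.
Proof. exact: (big_morph (fun A => M *t A) (fun A B => tensmxDr A B M) (tensmx0 M)). Qed.

Lemma tensmx11 m n : (1%:M : 'M[R]_m) *t (1%:M : 'M[R]_n) = 1%:M.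
Proof.
apply/matrixP=> I J; case: (mxtens_indexP I) => i k; case: (mxtens_indexP J) => j l.
rewrite tensmxE !mxE (inj_eq (can_inj (@mxtens_indexK m n))) xpair_eqE.
by rewrite -natrM mulnb.
Qed.

Definition vec_mx n (X : 'M[R]_n) : 'cV[R]_(n * n) :=
  \col_I X (mxtens_unindex I).1 (mxtens_unindex I).2.

Definition mx_vec n (v : 'cV[R]_(n * n)) : 'M[R]_n :=
  \matrix_(i, k) v (mxtens_index (i, k)) 0.

Lemma vec_mxE n (X : 'M[R]_n) i k : vec_mx X (mxtens_index (i, k)) 0 = X i k.
Proof. by rewrite mxE mxtens_indexK. Qed.

Lemma vec_mxK n : cancel (@vec_mx n) (@mx_vec n).
Proof. by move=> X; apply/matrixP=> i k; rewrite mxE vec_mxE. Qed.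

Lemma mx_vecK n : cancel (@mx_vec n) (@vec_mx n).
Proof.
move=> v; apply/matrixP=> I z; rewrite [z]ord1; case: (mxtens_indexP I) => i k.
by rewrite vec_mxE mxE.
Qed.

Lemma tensmx_mul_vec n (A B X : 'M[R]_n) :
  (A *t B) *m vec_mx X = vec_mx (A *m X *m B^T).
Proof.
apply/matrixP=> I z; rewrite [z]ord1; case: (mxtens_indexP I) => i k.
rewrite vec_mxE !mxE big_mxtens_index.
under eq_bigr => j _ do under eq_bigr => l _ do rewrite tensmxE vec_mxE.
rewrite exchange_big; apply: eq_bigr => l _; rewrite !mxE mulr_suml.
by apply: eq_bigr => j _; rewrite mulrAC.
Qed.

End TensorBilinear.

Section Hilbert.
Variable R : realType.
Local Notation C := R[i].

Lemma adjE p q (A : 'M[C]_(p, q)) i j : adj A i j = (A j i)^*.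
Proof. by rewrite !mxE. Qed.

Lemma adjM p q r (A : 'M[C]_(p, q)) (B : 'M_(q, r)) : adj (A *m B) = adj B *m adj A.
Proof. by rewrite /adj map_mxM trmx_mul. Qed.

Lemma adjK p q (A : 'M[C]_(p, q)) : adj (adj A) = A.
Proof. by apply/matrixP=> i j; rewrite !adjE conjCK. Qed.

Lemma adj1 p : adj (1%:M : 'M[C]_p) = 1%:M.
Proof. by rewrite /adj map_mx1 trmx1. Qed.

Lemma adjZ p q c (A : 'M[C]_(p, q)) : adj (c *: A) = c^* *: adj A.
Proof. by apply/matrixP=> i j; rewrite !(adjE, mxE) rmorphM. Qed.

Lemma adj_tens m n p q (A : 'M[C]_(m, n)) (B : 'M[C]_(p, q)) :
  adj (A *t B) = adj A *t adj B.
Proof.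
apply/matrixP=> I J; case: (mxtens_indexP I) => i k; case: (mxtens_indexP J) => j l.
by rewrite adjE !tensmxE !adjE rmorphM.
Qed.

Lemma innerE N (x y : 'cV[C]_N) : inner x y = \sum_i x i 0 * (y i 0)^*.
Proof. by rewrite /inner mxE; apply: eq_bigr => i _; rewrite adjE mulrC. Qed.

Lemma conj_inner N (x y : 'cV[C]_N) : (inner x y)^* = inner y x.
Proof.
rewrite !innerE rmorph_sum; apply: eq_bigr => i _.
by rewrite rmorphM /= conjCK mulrC.
Qed.

Lemma inner_adj p q (M : 'M[C]_(p, q)) x y : inner (M *m x) y = inner x (adj M *m y).
Proof. by rewrite /inner adjM adjK mulmxA. Qed.

Lemma innerDl N (x y z : 'cV[C]_N) : inner (x + y) z = inner x z + inner y z.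
Proof. by rewrite /inner mulmxDr mxE. Qed.

Lemma innerZl N c (x z : 'cV[C]_N) : inner (c *: x) z = c * inner x z.
Proof. by rewrite /inner -scalemxAr mxE. Qed.

Lemma innerDr N (x y z : 'cV[C]_N) : inner z (x + y) = inner z x + inner z y.
Proof. by rewrite -conj_inner innerDl rmorphD /= !conj_inner. Qed.

Lemma innerZr N c (x z : 'cV[C]_N) : inner z (c *: x) = c^* * inner z x.
Proof. by rewrite -conj_inner innerZl rmorphM /= !conj_inner. Qed.

Lemma inner_delta n (A : 'M[C]_n) i j : inner (A *m delta_mx j 0) (delta_mx i 0) = A i j.
Proof.
rewrite innerE -colE (bigD1 i) //= big1 => [|k nki]; rewrite !mxE.
  by rewrite !eqxx /= conjC1 mulr1 addr0.
by rewrite (negbTE nki) /= conjC0 mulr0.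
Qed.

Lemma innerNl N (x z : 'cV[C]_N) : inner (- x) z = - inner x z.
Proof. by rewrite -scaleN1r innerZl mulN1r. Qed.

Lemma adj_map_trmx p q (A : 'M[C]_(p, q)) : adj A = map_mx Num.conj A^T.
Proof. by rewrite /adj map_trmx. Qed.

Lemma conj_linear_eq0 (a b : C) : (forall c : C, c^* * a + c * b = 0) -> a = 0.
Proof.
move=> h; have /eqP := h 1; rewrite conjC1 !mul1r addr_eq0 => /eqP ha.
suff b0 : b = 0 by rewrite ha b0 oppr0.
have /eqP : 2 * 'i * b = 0 by rewrite -(h 'i) conjCi ha; ring.
by rewrite !mulf_eq0 pnatr_eq0 (negbTE (neq0Ci _)) => /eqP.
Qed.

Lemma inner_form_eq0 n (B : 'M[C]_n) : (forall x, inner (B *m x) x = 0) -> B = 0.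
Proof.
move=> hB; apply/matrixP => i j; rewrite mxE -inner_delta.
apply: (conj_linear_eq0 (b := inner (B *m delta_mx i 0) (delta_mx j 0))) => c.
have := hB (delta_mx j 0 + c *: delta_mx i 0).
rewrite mulmxDr -scalemxAr !(innerDl, innerDr, innerZl, innerZr) !hB.
by rewrite !mulr0 add0r addr0.
Qed.

Lemma psd1 n : psd (1%:M : 'M[C]_n).
Proof.
by move=> x; rewrite mul1mx innerE; apply: sumr_ge0 => i _; apply: mul_conjC_ge0.
Qed.

Lemma psd_conj p q (M : 'M[C]_(p, q)) (Y : 'M[C]_p) : psd Y -> psd (adj M *m Y *m M).
Proof. by move=> hY x; rewrite -!mulmxA inner_adj adjK; apply: hY. Qed.

Lemma psd_adj_mul p q (M : 'M[C]_(p, q)) : psd (adj M *m M).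
Proof. by rewrite -[adj M]mulmx1; apply/psd_conj/psd1. Qed.

Lemma psdZ n c (A : 'M[C]_n) : 0 <= c -> psd A -> psd (c *: A).
Proof. by move=> c0 hA x; rewrite -scalemxAl innerZl mulr_ge0. Qed.

Lemma psd_herm n (A : 'M[C]_n) : psd A -> adj A = A.
Proof.
move=> hA; apply/eqP; rewrite -subr_eq0; apply/eqP/inner_form_eq0 => x.
rewrite mulmxBl innerDl innerNl inner_adj adjK -conj_inner.
by rewrite conj_Creal ?subrr // ger0_real.
Qed.

Lemma psd_sqrt n (A : 'M[C]_n) : psd A -> exists B : 'M[C]_n, A = adj B *m B.
Proof.
move=> hA; have A_herm := psd_herm hA.
have /orthomx_spectralP A_eq : A \is normalmx.
  by apply/normalmxP; rewrite -adj_map_trmx A_herm.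
set P := spectralmx A in A_eq; set d := spectral_diag A in A_eq.
have P_unitary : P *m adj P = 1%:M.
  by rewrite adj_map_trmx; apply/unitarymxP/spectral_unitarymx.
rewrite invmx_unitary ?spectral_unitarymx // -adj_map_trmx in A_eq.
have d_ge0 i : 0 <= d 0 i.
  have := hA (adj P *m delta_mx i 0).
  rewrite {1}A_eq -!mulmxA (mulmxA P) P_unitary mul1mx.
  by rewrite inner_adj adjK mulmxA P_unitary mul1mx inner_delta mxE eqxx mulr1n.
pose s := \row_i sqrtC (d 0 i).
have s_adj : adj (diag_mx s) = diag_mx s.
  apply/matrixP => i j; rewrite adjE !mxE eq_sym.
  case: eqP => [->|_]; rewrite ?mulr1n ?mulr0n ?conjC0 //.
  by apply: conj_Creal; apply: sqrtC_real.
exists (diag_mx s *m P); rewrite adjM s_adj A_eq !mulmxA -(mulmxA (adj P)) mulmx_diag.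
by congr (_ *m diag_mx _ *m _); apply/rowP => j; rewrite !mxE -expr2 sqrtCK.
Qed.

Lemma psd_tens m n (F : 'M[C]_m) (A : 'M[C]_n) : psd F -> psd A -> psd (F *t A).
Proof.
move=> /psd_sqrt[B ->] /psd_sqrt[D ->].
by rewrite -tensmx_mul -adj_tens; apply: psd_adj_mul.
Qed.

Lemma psd_diag_eq0 n (A : 'M[C]_n) : psd A -> (forall k, A k k = 0) -> A = 0.
Proof.
move=> /psd_sqrt[B ->] A_diag; suff -> : B = 0 by rewrite mulmx0.
apply/matrixP => j k; rewrite mxE; apply/eqP; rewrite -mul_conjC_eq0; apply/eqP.
have Bk0 : \sum_l B l k * (B l k)^* = 0.
  by rewrite -[RHS](A_diag k) mxE; apply: eq_bigr => l _; rewrite adjE mulrC.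
exact: (psumr_eq0P (fun l _ => mul_conjC_ge0 (B l k)) Bk0).
Qed.

Lemma inner_vec n (X Y : 'M[C]_n) : inner (vec_mx X) (vec_mx Y) = \tr (adj Y *m X).
Proof.
rewrite innerE big_mxtens_index exchange_big; apply: eq_bigr => k _.
by rewrite mxE; apply: eq_bigr => i _; rewrite !vec_mxE adjE mulrC.
Qed.

Lemma vstate_tens_delta n (X M : 'M[C]_n) k l :
  vstate (vec_mx X) (M *t delta_mx k l) = (adj X *m M *m X) k l.
Proof. by rewrite /vstate tensmx_mul_vec trmx_delta inner_vec !mulmxA mxtrace_mul_delta. Qed.

Section LinearMaps.
Variables (p q : nat) (V : lmodType C) (f : 'M[C]_(p, q) -> V).
Hypothesis f_lin : is_linear f.

Lemma is_linear0 : f 0 = 0.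
Proof.
by have /eqP := f_lin 1 0 0; rewrite scale1r addr0 scale1r -subr_eq subrr eq_sym => /eqP.
Qed.

Lemma is_linearD A B : f (A + B) = f A + f B.
Proof. by rewrite -[A]scale1r f_lin !scale1r. Qed.

Lemma is_linearZ c A : f (c *: A) = c *: f A.
Proof. by rewrite -[c *: A]addr0 f_lin is_linear0 addr0. Qed.

Lemma is_linear_sum (I : Type) (r : seq I) (P : pred I) (F : I -> 'M[C]_(p, q)) :
  f (\sum_(i <- r | P i) F i) = \sum_(i <- r | P i) f (F i).
Proof. exact: (big_morph f is_linearD is_linear0). Qed.

End LinearMaps.

Lemma state_is_linear N (rho : 'M[C]_N -> C) : is_state rho -> is_linear (V := C^o) rho.
Proof. by case. Qed.

Lemma vstate_state N (xi : 'cV[C]_N) : unit_vector xi -> is_state (vstate xi).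
Proof.
move=> xi_unit; split=> [c A B|A A_psd|]; last by rewrite /vstate mul1mx.
  by rewrite /vstate mulmxDl -scalemxAl innerDl innerZl.
exact: A_psd.
Qed.

Section TensorWithIdentity.
Variables (m n : nat) (phi : 'M[C]_m -> 'M[C]_n).
Hypothesis phi_lin : is_linear phi.

Lemma tens_id_tens k (a : 'M[C]_m) (b : 'M[C]_k) : tens_id phi (a *t b) = phi a *t b.
Proof.
rewrite [in RHS](matrix_sum_delta a) [in RHS](matrix_sum_delta b).
rewrite (is_linear_sum phi_lin) tensmx_suml; apply: eq_bigr => i _.
rewrite (is_linear_sum phi_lin) tensmx_suml; apply: eq_bigr => j _.
rewrite (is_linearZ phi_lin) tensmxZl tensmx_sumr scaler_sumr; apply: eq_bigr => k1 _.
rewrite tensmx_sumr scaler_sumr; apply: eq_bigr => l _.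
by rewrite tensmxZr tensmxE scalerA.
Qed.

Lemma tens_id_is_linear k : is_linear (tens_id (k := k) phi).
Proof.
move=> c X Y; rewrite /tens_id scaler_sumr -big_split; apply: eq_bigr => i _.
rewrite scaler_sumr -big_split; apply: eq_bigr => j _.
rewrite scaler_sumr -big_split; apply: eq_bigr => k1 _.
rewrite scaler_sumr -big_split; apply: eq_bigr => l _.
by rewrite !mxE scalerDl scalerA.
Qed.

Lemma tens_id1 k : phi 1%:M = 1%:M -> tens_id (k := k) phi 1%:M = 1%:M.
Proof. by move=> phi1; rewrite -tensmx11 tens_id_tens phi1 tensmx11. Qed.

End TensorWithIdentity.

Lemma phi_state_state m n (phi : 'M[C]_m -> 'M[C]_n) xi :
  UCP phi -> unit_vector xi -> is_state (phi_state phi xi).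
Proof.
case=> phi_lin phi1 phi_cp xi_unit; have [xi_lin xi_ge0 xi1] := vstate_state xi_unit.
split=> [c X Y|X X_psd|]; rewrite /phi_state.
- by rewrite tens_id_is_linear // xi_lin.
- exact/xi_ge0/phi_cp.
- by rewrite tens_id1 // xi1.
Qed.

(* The transpose of the usual density matrix: a state [rho] is [A |-> \tr (D A)]
   with [D^T = density_mx rho]. *)
Definition density_mx n (f : 'M[C]_n -> C) : 'M[C]_n := \matrix_(k, l) f (delta_mx k l).

Section PositiveFunctional.
Variables (n : nat) (f : 'M[C]_n -> C).
Hypotheses (f_lin : is_linear (V := C^o) f) (f_ge0 : forall A, psd A -> 0 <= f A).

Lemma functional_density A : f A = \sum_k \sum_l A k l * density_mx f k l.
Proof.
rewrite {1}(matrix_sum_delta A) (is_linear_sum f_lin); apply: eq_bigr => k _.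
by rewrite (is_linear_sum f_lin); apply: eq_bigr => l _; rewrite (is_linearZ f_lin) mxE.
Qed.

Lemma density_mx_psd : psd (density_mx f).
Proof.
move=> x; pose y := map_mx Num.conj x.
have := f_ge0 (psd_adj_mul (adj y)); rewrite adjK.
suff -> : f (y *m adj y) = inner (density_mx f *m x) x by [].
rewrite functional_density innerE; apply: eq_bigr => k _.
rewrite mxE mulr_suml; apply: eq_bigr => l _.
by rewrite !mxE big_ord1 adjE !mxE conjCK; ring.
Qed.

Lemma positive_functional_eq0 : f 1%:M = 0 -> forall A, f A = 0.
Proof.
move=> f1 A; suff D0 : density_mx f = 0.
  by rewrite functional_density big1 // => k _; rewrite big1 // => l _; rewrite D0 mxE mulr0.
apply: (psd_diag_eq0 density_mx_psd) => k.
have diag_ge0 j : 0 <= density_mx f j j by rewrite -inner_delta; apply: density_mx_psd.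
have trace0 : \sum_j density_mx f j j = 0.
  rewrite -[RHS]f1 functional_density; apply: eq_bigr => j _.
  rewrite (bigD1 j) //= big1 => [|l nlj]; rewrite !mxE; first by rewrite eqxx mul1r addr0.
  by rewrite eq_sym (negbTE nlj) mul0r.
exact: (psumr_eq0P (fun j _ => diag_ge0 j) trace0).
Qed.

End PositiveFunctional.

Definition cond_state N n (rho : 'M[C]_(N * n) -> C) (F : 'M[C]_N) (b : 'M[C]_n) : C :=
  rho (F *t b) / rho (F *t 1%:M).

Section ConditionalState.
Variables (N n : nat) (rho : 'M[C]_(N * n) -> C) (F : 'M[C]_N).
Hypotheses (rho_state : is_state rho) (F_psd : psd F).

Lemma tens_slice_linear : is_linear (V := C^o) (fun b : 'M[C]_n => rho (F *t b)).
Proof. by move=> c a b /=; rewrite tensmxDr tensmxZr; case: rho_state => ->. Qed.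

Lemma tens_slice_ge0 b : psd b -> 0 <= rho (F *t b).
Proof. by case: rho_state => _ rho_ge0 _ b_psd; apply/rho_ge0/psd_tens. Qed.

Lemma cond_state_state : rho (F *t 1%:M) != 0 -> is_state (cond_state rho F).
Proof.
move=> d_neq0; split=> [c a b|b b_psd|]; rewrite /cond_state.
- by rewrite tens_slice_linear mulrDl mulrA.
- by apply: divr_ge0; apply: tens_slice_ge0 => //; apply: psd1.
- by rewrite divff.
Qed.

Lemma tens_slice_eq0 : rho (F *t 1%:M) = 0 -> forall b, rho (F *t b) = 0.
Proof. exact: (positive_functional_eq0 tens_slice_linear tens_slice_ge0). Qed.

End ConditionalState.

Definition holevo_form m n (phi : 'M[C]_m -> 'M[C]_n) : Prop :=
  exists (r : nat) (sigma : 'I_r -> 'M[C]_m -> C) (F : 'I_r -> 'M[C]_n),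
    [/\ forall j, is_state (sigma j), forall j, psd (F j)
      & forall a, phi a = \sum_j sigma j a *: F j].

Lemma holevo_form_entanglement_breaking m n (phi : 'M[C]_m -> 'M[C]_n) :
  is_linear phi -> phi 1%:M = 1%:M -> holevo_form phi -> entanglement_breaking phi.
Proof.
move=> phi_lin phi1 [r [sigma [F [sigma_state F_psd phiE]]]] rho rho_state.
have rho_lin := state_is_linear rho_state.
pose d j := rho (F j *t 1%:M).
(* If [d j = 0] the [j]-th term vanishes by [tens_slice_eq0]; conditioning on [1%:M]
   there merely supplies some state. *)
exists r, d, sigma, (fun j => cond_state rho (if d j == 0 then 1%:M else F j)); split.
- by move=> j; apply: tens_slice_ge0 => //; apply: psd1.
- have [_ _ rho1] := rho_state.
  rewrite -[RHS]rho1 -tensmx11 -{1}phi1 phiE tensmx_suml (is_linear_sum rho_lin).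
  by apply: eq_bigr => j _; have [_ _ ->] := sigma_state j; rewrite scale1r.
- move=> j; split=> //; apply: cond_state_state => //.
    by case: ifP => _; [apply: psd1 | apply: F_psd].
  case: ifPn => // _; have [_ _ rho1] := rho_state; rewrite tensmx11 rho1; exact: oner_neq0.
- move=> a b; rewrite /= tens_id_tens // phiE tensmx_suml (is_linear_sum rho_lin).
  apply: eq_bigr => j _; rewrite tensmxZl (is_linearZ rho_lin) /cond_state.
  have [dj0|dj_neq0] := eqVneq (d j) 0.
    by rewrite (tens_slice_eq0 rho_state (F_psd j) dj0) dj0 !mul0r [LHS]mulr0.
  by rewrite /d in dj_neq0 *; rewrite [RHS]mulrC mulrA divfK // mulrC.
Qed.

Lemma marginally_cyclic_unitmx n (X : 'M[C]_n) : marginally_cyclic (vec_mx X) -> X \in unitmx.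
Proof.
move=> /(_ (vec_mx 1%:M))[a]; rewrite tensmx_mul_vec trmx1 mulmx1.
by move=> /(can_inj (@vec_mxK _ _))/mulmx1_unit[].
Qed.

Lemma phi_state_tens_delta m n (phi : 'M[C]_m -> 'M[C]_n) (X : 'M[C]_n) a k l :
  is_linear phi -> phi_state phi (vec_mx X) (a *t delta_mx k l) = (adj X *m phi a *m X) k l.
Proof. by move=> phi_lin; rewrite /phi_state tens_id_tens // vstate_tens_delta. Qed.

Lemma separable_phi_state_holevo m n (phi : 'M[C]_m -> 'M[C]_n) xi :
  is_linear phi -> marginally_cyclic xi -> separable (phi_state phi xi) -> holevo_form phi.
Proof.
move=> phi_lin; rewrite -[xi]mx_vecK; set X := mx_vec xi.
move=> /marginally_cyclic_unitmx X_unit [r [p [sigma [tau [p_ge0 _ sigma_tau_state sepE]]]]].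
have compressE a : adj X *m phi a *m X = \sum_j (p j * sigma j a) *: density_mx (tau j).
  apply/matrixP => k l; rewrite -phi_state_tens_delta // sepE summxE.
  by apply: eq_bigr => j _; rewrite !mxE.
pose Y := invmx X.
exists r, sigma, (fun j => p j *: (adj Y *m density_mx (tau j) *m Y)); split.
- by move=> j; case: (sigma_tau_state j).
- move=> j; apply: psdZ (p_ge0 j) _; apply: psd_conj.
  have [_ tau_state] := sigma_tau_state j; have [_ tau_ge0 _] := tau_state.
  exact: density_mx_psd (state_is_linear tau_state) tau_ge0.
- move=> a; have -> : phi a = adj Y *m (adj X *m phi a *m X) *m Y.
    by rewrite !mulmxA -adjM mulmxV // adj1 mul1mx -mulmxA mulmxV // mulmx1.
  rewrite compressE mulmx_sumr mulmx_suml; apply: eq_bigr => j _.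
  by rewrite -scalemxAr -scalemxAl scalerA mulrC.
Qed.

Lemma exists_marginally_cyclic_unit n : (0 < n)%N ->
  exists xi : 'cV[C]_(n * n), unit_vector xi /\ marginally_cyclic xi.
Proof.
move=> n_gt0; pose s : C := sqrtC n%:R.
have s_neq0 : s != 0 by rewrite sqrtC_eq0 pnatr_eq0 -lt0n.
have s_real : s^* = s by apply: conj_Creal; apply: sqrtC_real; apply: ler0n.
exists (vec_mx (s^-1 *: 1%:M)); split.
- rewrite /unit_vector inner_vec adjZ adj1 -scalemxAl -scalemxAr mulmx1 scalerA.
  rewrite mxtraceZ mxtrace1 fmorphV /= s_real -[n%:R]sqrtCK.
  by rewrite -/s expr2 -mulrA mulKf // mulVf.
- move=> eta; exists (s *: mx_vec eta).
  rewrite tensmx_mul_vec trmx1 mulmx1 -scalemxAr mulmx1 scalerA.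
  by rewrite mulVf // scale1r mx_vecK.
Qed.

Lemma entanglement_breaking_dim0 m (phi : 'M[C]_m -> 'M[C]_0) : entanglement_breaking phi.
Proof.
move=> rho rho_state; exfalso; have [_ _] := rho_state.
have -> : (1%:M : 'M[C]_(0 * 0)) = 0.
  by apply/matrixP => -[i i_lt0]; exfalso; rewrite muln0 in i_lt0.
by rewrite (is_linear0 (state_is_linear rho_state)) => /eqP; rewrite eq_sym oner_eq0.
Qed.

End Hilbert.

Theorem corollary2p3 (R : realType) (m n : nat)
    (phi : 'M[R[i]]_m -> 'M[R[i]]_n) :
  UCP phi ->
  ((exists rho, S_phi phi rho /\ entangled rho) ->
     (forall rho, S_phi phi rho -> entangled rho) /\ preserves_entanglement phi)
  /\
  (~ (exists rho, S_phi phi rho /\ entangled rho) -> entanglement_breaking phi).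
Proof.
move=> phi_UCP; have [phi_lin phi1 _] := phi_UCP.
have separable_EB xi : marginally_cyclic xi -> separable (phi_state phi xi) ->
    entanglement_breaking phi.
  move=> xi_mc /(separable_phi_state_holevo phi_lin xi_mc).
  exact: holevo_form_entanglement_breaking phi_lin phi1.
split.
- move=> [_ [[xi0 [xi0_unit _ ->]] [_ xi0_ent]]].
  have all_entangled xi :
      unit_vector xi -> marginally_cyclic xi -> entangled (phi_state phi xi).
    move=> xi_unit xi_mc; split; first exact: phi_state_state.
    by move=> /(separable_EB _ xi_mc) phi_EB; apply/xi0_ent/phi_EB/vstate_state.
  by split=> [_ [xi [xi_unit xi_mc ->]]|]; apply: all_entangled.
- move=> no_entangled; have [n0|n_gt0] := posnP n.
    by subst n; apply: entanglement_breaking_dim0.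
  have [xi [xi_unit xi_mc]] := exists_marginally_cyclic_unit R n_gt0.
  apply: (separable_EB xi xi_mc); apply: NNPP => not_sep; apply: no_entangled.
  by exists (phi_state phi xi); split; [exists xi | split => //; apply: phi_state_state].
Qed.
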